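(* Let $k \ge 2$ be an integer. Let $\mathcal{G}$ be a hereditary class of finite simple graphs such that every graph $G \in \mathcal{G}$ contains a $k$-simplicial vertex. Then every graph in $\mathcal{G}$ with at least one edge is $(k+1)$-divisible.
   Context: A class of graphs is hereditary if it is closed under taking induced subgraphs. A vertex $v$ of a graph $G$ is $k$-simplicial if its neighborhood $N_G(v)$ can be partitioned into $k$ (possibly empty) cliques. For an integer $m \ge 2$, a graph $G$ with at least one edge is $m$-divisible if for every induced subgraph $H$ of $G$ with at least one edge, the vertex set $V(H)$ can be partitioned into $m$ sets, none of which contains a maximum clique of $H$ (i.e. none contains a clique of size $\omega(H)$, where $\omega(H)$ is the clique number of $H$). *)

From mathcomp Require Import all_boot.
Set Implicit Arguments. Unset Strict Implicit. Unset Printing Implicit Defensive.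

Definition simple_graph (T : finType) (e : rel T) : Prop :=
  symmetric e /\ irreflexive e.

Definition clique (T : finType) (e : rel T) (A : {set T}) : bool :=
  [forall x in A, forall y in A, (x != y) ==> e x y].

Definition nbhd (T : finType) (e : rel T) (v : T) : {set T} := [set u | e v u].

(* partition of B into m possibly empty parts Q i *)
Definition is_partition_into (T : finType) (m : nat) (Q : 'I_m -> {set T})
    (B : {set T}) : Prop :=
  (forall i j, i != j -> [disjoint Q i & Q j]) /\ \bigcup_(i < m) Q i = B.

Definition k_simplicial (T : finType) (e : rel T) (k : nat) (v : T) : Prop :=
  exists Q : 'I_k -> {set T},
    is_partition_into Q (nbhd e v) /\ forall i, clique e (Q i).

Definition omega_in (T : finType) (e : rel T) (S : {set T}) : nat :=
  \max_(A : {set T} | (A \subset S) && clique e A) #|A|.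

Definition has_edge_in (T : finType) (e : rel T) (S : {set T}) : Prop :=
  exists x y, [/\ x \in S, y \in S & e x y].

Definition divisible (T : finType) (e : rel T) (m : nat) : Prop :=
  has_edge_in e [set: T] /\
  forall S : {set T}, has_edge_in e S ->
    exists Q : 'I_m -> {set T}, is_partition_into Q S /\
      forall i (A : {set T}), A \subset Q i -> clique e A -> #|A| < omega_in e S.

Definition induced_type (T : finType) (S : {set T}) : finType :=
  {x : T | x \in S}.
Definition induced_rel (T : finType) (e : rel T) (S : {set T}) :
  rel (induced_type S) := fun x y => e (val x) (val y).

Definition graph_class := forall T : finType, rel T -> Prop.

Definition hereditary (P : graph_class) : Prop :=
  forall (T : finType) (e : rel T) (S : {set T}),
    P T e -> P (@induced_type T S) (@induced_rel T e S).

From mathcomp Require Import all_boot zify.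

Set Implicit Arguments.
Unset Strict Implicit.
Unset Printing Implicit Defensive.

(** Let [n.+1] be the clique number of [G[S]].  By induction on subsets of
    [S], any such subset splits into [k.+1] parts without cliques of size
    [n.+1]: remove a [k]-simplicial vertex [x], split the rest, and put [x]
    into a part [X j] where it creates no such clique.  If every part failed,
    each [X j] would contain a clique of [n] neighbours of [x], giving
    [(k.+1) * n] neighbours of [x] in [S]; but these are covered by [k]
    cliques, each of which has at most [n] vertices in [N(x)] because adding
    [x] keeps it a clique.  This works for every [k]. *)

Lemma card_bigcup_le (T : finType) (I : finType) (F : I -> {set T}) :
  #|\bigcup_i F i| <= \sum_i #|F i|.
Proof.
apply: (big_ind2 (fun (A : {set T}) s => #|A| <= s)) => // [|A s B t leAs leBt].
  by rewrite cards0.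
exact: leq_trans (leq_card_setU A B) (leq_add leAs leBt).
Qed.

Lemma card_bigcup_disjoint (T : finType) (I : finType) (F : I -> {set T}) :
  (forall i j, i != j -> [disjoint F i & F j]) ->
  #|\bigcup_i F i| = \sum_i #|F i|.
Proof.
move=> disjF; rewrite -sum1_card partition_disjoint_bigcup //.
by apply: eq_bigr => i _; rewrite sum1_card.
Qed.

Lemma disjoint_setU1 (T : finType) (x : T) (A B : {set T}) :
  [disjoint x |: A & B] = (x \notin B) && [disjoint A & B].
Proof. by rewrite -setI_eq0 setIUl setU_eq0 !setI_eq0 disjoints1. Qed.

Lemma partition_setU1 (T : finType) m (X : 'I_m -> {set T}) (S : {set T}) x j :
  is_partition_into X (S :\ x) -> x \in S ->
  is_partition_into (fun i => if i == j then x |: X i else X i) S.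
Proof.
move=> [disjX coverX] xS.
have xNX i : x \notin X i.
  by apply/negP => /(subsetP (bigcup_sup i isT)); rewrite coverX !inE eqxx.
split=> [i i' neq_ii' /=|].
  case: ifP => [/eqP eq_ij|_]; case: ifP => [/eqP eq_i'j|_].
  - by rewrite eq_ij eq_i'j eqxx in neq_ii'.
  - by rewrite disjoint_setU1 xNX disjX.
  - by rewrite disjoint_sym disjoint_setU1 xNX disjoint_sym disjX.
  - exact: disjX.
rewrite (bigD1 j) //= eqxx (eq_bigr X) => [|i /negbTE -> //].
rewrite -setUA -[RHS](setD1K xS) -coverX; congr (_ |: _).
exact: esym (bigD1 j isT).
Qed.

Section CliqueBoundedPartition.
Variables (T : finType) (e : rel T).

Lemma cliqueP (A : {set T}) :
  reflect (forall x y, x \in A -> y \in A -> x != y -> e x y) (clique e A).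
Proof.
apply: (iffP forall_inP) => [cA x y xA yA | cA x xA].
  by move/forall_inP/(_ y yA)/implyP: (cA x xA).
by apply/forall_inP => y yA; apply/implyP; apply: cA.
Qed.

Definition clique_bounded (n : nat) (A : {set T}) : bool :=
  [forall B : {set T}, (B \subset A) && clique e B ==> (#|B| <= n)].

Lemma clique_boundedP (n : nat) (A : {set T}) :
  reflect (forall B : {set T}, B \subset A -> clique e B -> #|B| <= n)
          (clique_bounded n A).
Proof.
apply: (iffP forallP) => [bA B BA cB | bA B].
  by apply: implyP (bA B) _; rewrite BA.
by apply/implyP => /andP[]; apply: bA.
Qed.

Lemma clique_boundedS (n : nat) (A A' : {set T}) :
  A' \subset A -> clique_bounded n A -> clique_bounded n A'.
Proof.
move=> sA'A /clique_boundedP bA; apply/clique_boundedP => B sBA'.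
exact/bA/(subset_trans sBA').
Qed.

Lemma clique_bounded0 (n : nat) : clique_bounded n set0.
Proof.
by apply/clique_boundedP => B; rewrite subset0 => /eqP-> _; rewrite cards0.
Qed.

(** A relaxation of [k_simplicial] relative to the induced subgraph [G[S]]:
    the cliques only need to cover the neighbourhood and may leave [S]. *)
Definition simplicial_in (k : nat) (S : {set T}) (x : T) : Prop :=
  exists2 C : 'I_k -> {set T},
    forall i, clique e (C i) & nbhd e x :&: S \subset \bigcup_i C i.

Hypotheses (e_sym : symmetric e) (e_irr : irreflexive e).

Lemma card_clique_nbhd (n : nat) (S : {set T}) (x : T) (C : {set T}) :
  x \in S -> clique_bounded n.+1 S -> clique e C ->
  #|C :&: (nbhd e x :&: S)| <= n.
Proof.
move=> xS /clique_boundedP bS cC.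
set D := C :&: (nbhd e x :&: S).
have xND : x \notin D by rewrite !inE e_irr andbF.
suff : #|x |: D| <= n.+1 by rewrite cardsU1 xND.
apply: bS.
  by apply/subsetP => y /setU1P[-> // | /setIP[_ /setIP[]]].
apply/cliqueP => y z; rewrite !inE.
move=> /predU1P[->|/and3P[yC exy _]] /predU1P[->|/and3P[zC exz _]] //.
- by rewrite eqxx.
- by rewrite e_sym.
- exact: (cliqueP _ cC).
Qed.

Lemma card_nbhd_simplicial (k n : nat) (S : {set T}) (x : T) :
  x \in S -> simplicial_in k S x -> clique_bounded n.+1 S ->
  #|nbhd e x :&: S| <= k * n.
Proof.
move=> xS [C cC coverC] bS.
rewrite -(setIidPr coverC) big_distrl (leq_trans (card_bigcup_le _)) //.
rewrite -[k in k * n]card_ord -sum_nat_const leq_sum // => i _.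
exact: card_clique_nbhd.
Qed.

Lemma large_clique_setU1 (n : nat) (x : T) (X A : {set T}) :
  clique_bounded n X -> A \subset x |: X -> clique e A -> n < #|A| ->
  A :\ x \subset nbhd e x :&: X /\ n <= #|A :\ x|.
Proof.
move=> /clique_boundedP bX sAxX cA ltnA.
have xA : x \in A.
  apply: contraTT ltnA => xNA; rewrite -leqNgt bX //.
  apply/subsetP => y yA; have /setU1P[yx|//] := subsetP sAxX y yA.
  by rewrite -yx yA in xNA.
split; last by move: ltnA; rewrite (cardsD1 x A) xA.
apply/subsetP => y /setD1P[neq_yx yA].
have /setU1P[eq_yx|yX] := subsetP sAxX y yA; first by rewrite eq_yx eqxx in neq_yx.
by rewrite !inE yX (cliqueP _ cA) // eq_sym.
Qed.

Lemma exists_clique_bounded_setU1 (k n : nat) (S : {set T}) (x : T)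
    (X : 'I_k.+1 -> {set T}) :
  0 < n -> x \in S -> simplicial_in k S x -> clique_bounded n.+1 S ->
  (forall i j, i != j -> [disjoint X i & X j]) -> (forall j, X j \subset S) ->
  (forall j, clique_bounded n (X j)) ->
  exists j, clique_bounded n (x |: X j).
Proof.
move=> n_gt0 xS xsimp bS disjX sXS bX; apply/existsP/contraT => /existsPn unbounded.
have /fin_all_exists[A bigA] : forall j, exists B : {set T},
    [/\ B \subset x |: X j, clique e B & n < #|B|].
  move=> j; have /forallPn[B] := unbounded j.
  by rewrite negb_imply -ltnNge => /andP[/andP[sBX cB] ltnB]; exists B.
pose K j := A j :\ x.
have [sKX leKn] : (forall j, K j \subset nbhd e x :&: X j) /\ (forall j, n <= #|K j|).
  by split=> j; have [sAX cA ltnA] := bigA j;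
    have [] := large_clique_setU1 (bX j) sAX cA ltnA.
have disjK i j : i != j -> [disjoint K i & K j].
  move=> neq_ij; apply: disjointWl (subset_trans (sKX i) (subsetIr _ _)) _.
  exact: disjointWr (subset_trans (sKX j) (subsetIr _ _)) (disjX i j neq_ij).
have sKN : \bigcup_j K j \subset nbhd e x :&: S.
  by apply/bigcupsP => j _; rewrite (subset_trans (sKX j)) ?setIS.
have := leq_trans (subset_leq_card sKN) (card_nbhd_simplicial xS xsimp bS).
rewrite card_bigcup_disjoint // => le_sum.
have : \sum_(j < k.+1) n <= \sum_j #|K j| by apply: leq_sum => j _; apply: leKn.
by rewrite sum_nat_const card_ord; lia.
Qed.

Lemma clique_bounded_partition (k n : nat) (S : {set T}) :
  0 < n ->
  (forall S' : {set T}, S' != set0 -> exists2 x, x \in S' & simplicial_in k S' x) ->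
  clique_bounded n.+1 S ->
  exists2 Q : 'I_k.+1 -> {set T},
    is_partition_into Q S & forall i, clique_bounded n (Q i).
Proof.
move=> n_gt0 simp; have [m] := ubnP #|S|; elim: m S => // m IH S /ltnSE leSm bS.
have [->|/simp[x xS xsimp]] := eqVneq S set0.
  exists (fun=> set0) => [|i]; last exact: clique_bounded0.
  by split=> [i j _|]; [rewrite -setI_eq0 setI0 | rewrite big1].
have [|X [disjX coverX] bX] := IH (S :\ x) _ (clique_boundedS (subD1set S x) bS).
  by move: leSm; rewrite (cardsD1 x S) xS.
have sXS j : X j \subset S.
  by rewrite (subset_trans _ (subD1set S x)) // -coverX bigcup_sup.
have [j bXj] := exists_clique_bounded_setU1 n_gt0 xS xsimp bS disjX sXS bX.
exists (fun i => if i == j then x |: X i else X i); first exact: partition_setU1.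
by move=> i; case: eqP => [->|].
Qed.

End CliqueBoundedPartition.

Lemma simple_graph_induced (T : finType) (e : rel T) (S : {set T}) :
  simple_graph e -> simple_graph (@induced_rel T e S).
Proof. by move=> [e_sym e_irr]; split=> [u v | u]; [apply: e_sym | apply: e_irr]. Qed.

Lemma simplicial_in_induced (T : finType) (e : rel T) k (S : {set T})
    (v : induced_type S) :
  k_simplicial (@induced_rel T e S) k v -> simplicial_in e k S (val v).
Proof.
move=> [Q [[_ coverQ] cQ]]; exists (fun i => val @: Q i).
  move=> i; apply/cliqueP => _ _ /imsetP[a aQ ->] /imsetP[b bQ ->] neq_ab.
  by apply: (cliqueP _ _ (cQ i)) => //; apply: contra neq_ab => /eqP->.
apply/subsetP => u /setIP[]; rewrite inE => evu uS.
have : (Sub u uS : induced_type S) \in nbhd (@induced_rel T e S) v by rewrite inE.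
rewrite -coverQ => /bigcupP[i _ uQ].
by apply/bigcupP; exists i => //; apply/imsetP; exists (Sub u uS).
Qed.

Lemma clique_bounded_omega (T : finType) (e : rel T) (S : {set T}) :
  clique_bounded e (omega_in e S) S.
Proof.
apply/clique_boundedP => A sAS cA; rewrite /omega_in.
pose P (B : {set T}) := (B \subset S) && clique e B.
by apply: (leq_bigmax_cond A (P := P)); rewrite /P sAS.
Qed.

Lemma omega_in_gt1 (T : finType) (e : rel T) (S : {set T}) x y :
  symmetric e -> irreflexive e -> x \in S -> y \in S -> e x y -> 1 < omega_in e S.
Proof.
move=> e_sym e_irr xS yS exy.
have neq_xy : x != y by apply: contraTneq exy => ->; rewrite e_irr.
have := clique_boundedP _ _ _ (clique_bounded_omega e S) [set x; y].
rewrite cards2 neq_xy; apply.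
  by apply/subsetP => z; rewrite !inE => /orP[]/eqP->.
apply/cliqueP => a b; rewrite !inE => /orP[]/eqP-> /orP[]/eqP->; rewrite ?eqxx //.
by rewrite e_sym.
Qed.

Theorem theorem1p5 (k : nat) (P : graph_class) :
  2 <= k ->
  hereditary P ->
  (forall (T : finType) (e : rel T), P T e -> simple_graph e ->
     0 < #|T| -> exists v : T, k_simplicial e k v) ->
  forall (T : finType) (e : rel T), P T e -> simple_graph e ->
    (exists x y : T, e x y) -> divisible e k.+1.
Proof.
move=> _ hered simp T e PTe simple_e [x0 [y0 exy0]]; have [e_sym e_irr] := simple_e.
split=> [|S [x [y [xS yS exy]]]]; first by exists x0, y0; rewrite !inE.
have simpS (S' : {set T}) : S' != set0 -> exists2 x, x \in S' & simplicial_in e k S' x.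
  move=> /set0Pn[z zS].
  have [|v vsimp] := simp _ _ (hered T e S' PTe) (simple_graph_induced S' simple_e).
    by apply/card_gt0P; exists (Sub z zS).
  by exists (val v); [apply: valP | apply: simplicial_in_induced].
move: (omega_in_gt1 e_sym e_irr xS yS exy) (clique_bounded_omega e S).
case: (omega_in e S) => // n n_gt0 bS.
have [Q partQ bQ] := clique_bounded_partition e_sym e_irr n_gt0 simpS bS.
by exists Q; split=> // i A sAQ cA; apply: (clique_boundedP _ _ _ (bQ i)).
Qed.
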